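(* Let $f\in\mathcal{H}$ be strongly non-polynomial with $f(t)\gg t^\delta$ for some $\delta>0$. Then: (i) the class $S(f,k)$ is non-empty for all sufficiently large $k$; (ii) for every $0<c<1$ sufficiently close to $1$, there exists $k_0\in\mathbb{N}$ such that the function $t\mapsto t^c$ belongs to $S(f,k_0)$; (iii) the class $S(f,k)$ does not contain all functions $t\mapsto t^c$ with $c$ sufficiently close to $1$ (i.e. there is no $c_0<1$ such that $t^c\in S(f,k)$ for all $c\in(c_0,1)$).
   Context: $\mathcal{H}$ is a fixed Hardy field (subfield of germs at $+\infty$ of real functions, closed under differentiation) containing the logarithmico-exponential functions, closed under composition and compositional inversion. $f$ is strongly non-polynomial if $t^d\prec f(t)\prec t^{d+1}$ for some integer $d\ge0$, where $f\prec g$ means $f/g\to0$; $f\gg g$ means $|g(t)|\le C|f(t)|$ eventually. For $k$ large enough that $f^{(k)}(t)\to0$, $S(f,k)=\{g\in\mathcal{H}:\ |f^{(k)}(t)|^{-1/k}\preceq g(t)\prec|f^{(k+1)}(t)|^{-1/(k+1)}\}$, where $u\preceq v$ means $\lim_{t\to\infty}|v(t)/u(t)|$ is non-zero (possibly infinite). *)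

(* R : realType, functions R -> R viewed as germs at +oo. *)
From HB Require Import structures.
From mathcomp Require Import all_boot all_order all_algebra.
From mathcomp Require Import all_classical all_reals all_analysis.
Set Implicit Arguments. Unset Strict Implicit. Unset Printing Implicit Defensive.
Import Order.TTheory GRing.Theory Num.Theory.
Import numFieldNormedType.Exports.
Local Open Scope classical_set_scope.
Local Open Scope ring_scope.

Section Hardy.
Variable R : realType.

Definition eventeq (f g : R -> R) : Prop := \forall t \near +oo, f t = g t.

(* A Hardy field: a set of functions, stable under eventual equality (so it is
   really a set of germs at +oo), forming a subfield of the ring of germs, whose
   elements are eventually differentiable with derivative again in the set. *)
Record hardy_field (H : set (R -> R)) : Prop := {
  hf_germ : forall f g, H f -> eventeq f g -> H g;
  hf_one : H (fun=> 1);
  hf_add : forall f g, H f -> H g -> H (fun t => f t + g t);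
  hf_opp : forall f, H f -> H (fun t => - f t);
  hf_mul : forall f g, H f -> H g -> H (fun t => f t * g t);
  hf_inv : forall f, H f -> ~ eventeq f (fun=> 0) ->
             exists2 g, H g & eventeq (fun t => f t * g t) (fun=> 1);
  hf_diff : forall f, H f ->
             (\forall t \near +oo, derivable f t 1) /\ H (derive1 f)
}.

(* Logarithmico-exponential (Hardy L-) functions: syntax *)
Inductive LEterm : Type :=
  | LE_cst of R
  | LE_id
  | LE_add of LEterm & LEterm
  | LE_opp of LEterm
  | LE_mul of LEterm & LEterm
  | LE_inv of LEterm
  | LE_exp of LEterm
  | LE_ln of LEterm.

Fixpoint LE_eval (e : LEterm) : R -> R :=
  match e with
  | LE_cst c => fun=> c
  | LE_id => id
  | LE_add a b => fun t => LE_eval a t + LE_eval b t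
  | LE_opp a => fun t => - LE_eval a t
  | LE_mul a b => fun t => LE_eval a t * LE_eval b t
  | LE_inv a => fun t => (LE_eval a t)^-1
  | LE_exp a => fun t => expR (LE_eval a t)
  | LE_ln a => fun t => ln (LE_eval a t)
  end.

Fixpoint LE_wd (e : LEterm) : Prop :=
  match e with
  | LE_cst _ | LE_id => True
  | LE_add a b | LE_mul a b => LE_wd a /\ LE_wd b
  | LE_opp a | LE_exp a => LE_wd a
  | LE_inv a => LE_wd a /\ \forall t \near +oo, LE_eval a t != 0
  | LE_ln a => LE_wd a /\ \forall t \near +oo, 0 < LE_eval a t
  end.

Definition contains_LE (H : set (R -> R)) : Prop :=
  forall e, LE_wd e -> H (LE_eval e).

Definition hardy_closed_comp (H : set (R -> R)) : Prop :=
  forall f g, H f -> H g -> g x @[x --> +oo] --> +oo -> H (f \o g).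

Definition hardy_closed_inv (H : set (R -> R)) : Prop :=
  forall f, H f -> f x @[x --> +oo] --> +oo ->
    exists g, [/\ H g, g x @[x --> +oo] --> +oo,
                  eventeq (f \o g) id & eventeq (g \o f) id].

Definition lt_growth (f g : R -> R) : Prop := (f x / g x) @[x --> +oo] --> 0.

Definition le_growth (u v : R -> R) : Prop :=
  exists l : \bar R, (l != 0)%E /\
    ((`|v x / u x|)%:E @[x --> +oo] --> l).

Definition dominates (f g : R -> R) : Prop :=
  exists C : R, \forall t \near +oo, `|g t| <= C * `|f t|.

Definition strongly_nonpoly (f : R -> R) : Prop :=
  exists d : nat, lt_growth (fun t => t ^+ d) f /\ lt_growth f (fun t => t ^+ d.+1).

Definition S_class (H : set (R -> R)) (f : R -> R) (k : nat) : set (R -> R) :=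
  [set g | H g /\
     le_growth (fun t => `|derive1n k f t| `^ (- (k%:R)^-1)) g /\
     lt_growth g (fun t => `|derive1n k.+1 f t| `^ (- (k.+1%:R)^-1))].

End Hardy.

From HB Require Import structures.
From mathcomp Require Import all_boot all_order all_algebra.
From mathcomp Require Import all_classical all_reals all_analysis.
From mathcomp Require Import ring lra.
Set Implicit Arguments. Unset Strict Implicit. Unset Printing Implicit Defensive.
Import Order.TTheory GRing.Theory Num.Theory.
Import numFieldNormedType.Exports.
Local Open Scope classical_set_scope.
Local Open Scope ring_scope.

(* Write F_k for the k-th derivative of f, where t^d ≺ f ≺ t^(d+1).  Every
   element of a Hardy field is eventually monotone, hence has a limit in
   [-oo, +oo]; together with the mean value theorem this lets comparisons with
   powers of t pass through differentiation and integration.  Hence F_k tends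
   to 0 exactly when k > d, and for such k, given 0 < e < 1 with e <= delta,
       m t^(e-k) <= |F_k t|   and   t |F_(k+1) t| <= M |F_k t|.
   On the logarithmic scale these are linear bounds on ln |F_k t| in terms of
   ln t.  They show that u_k = |F_k|^(-1/k) satisfies u_k ≺ u_(k+1), so that
   u_k lies in S(f,k); that t^c / u_k does not tend to 0 once c >= 1 - e/k; and
   that t^c / u_(d+1+i) tends to 0 once c < i/(d+1+i).  So for c close to 1 the
   function t^c lies in S(f,k) for the last k at which t^c / u_k does not tend
   to 0 (its Hardy-field limit is then non-zero), and no single class S(f,k)
   contains t^c for all c close to 1. *)

Section AnalysisAtInfinity.
Variable R : realType.
Implicit Types (g h dg dh : R -> R) (a b c m t x y T : R).

Lemma near_pinfty_ge_all (P : R -> Prop) :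
  (\forall t \near +oo, P t) -> \forall T \near +oo, forall t, T <= t -> P t.
Proof.
case=> M [Mreal HM]; exists M; split => // T MT t Tt.
by apply: HM; exact: lt_le_trans Tt.
Qed.

Lemma powRVl x r : 0 < x -> x^-1 `^ r = (x `^ r)^-1.
Proof.
by move=> x0; rewrite /powR invr_eq0 gt_eqF // lnV ?posrE // mulrN expRN.
Qed.

Lemma powR_cvgy a : 0 < a -> t `^ a @[t --> +oo] --> +oo.
Proof.
move=> a0; apply/cvgryPge => A; pose M := Num.max A 1.
have M0 : 0 < M by rewrite lt_max ltr01 orbT.
near=> t; apply: (@le_trans _ _ M); first by rewrite le_max lexx.
have -> : M = (M `^ a^-1) `^ a by rewrite -powRrM mulVf ?gt_eqF // powRr1 // ltW.
by apply: (ge0_ler_powR (ltW a0)); rewrite ?nnegrE ?powR_ge0.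
Unshelve. all: end_near. Qed.

Lemma ler_norm_div_powR (h b c t : R) : 0 < t ->
  (`|h / t `^ b| <= c) = (`|h| <= c * t `^ b).
Proof.
move=> t0; rewrite normrM normfV (gtr0_norm (powR_gt0 b t0)).
by rewrite ler_pdivrMr ?powR_gt0.
Qed.

Lemma ger_norm_div_powR (h b c t : R) : 0 < t ->
  (c <= `|h / t `^ b|) = (c * t `^ b <= `|h|).
Proof.
move=> t0; rewrite normrM normfV (gtr0_norm (powR_gt0 b t0)).
by rewrite ler_pdivlMr ?powR_gt0.
Qed.

Lemma div_powRr0 h : (fun t => h t / t `^ 0) = h.
Proof. by apply/funext => t; rewrite powRr0 divr1. Qed.

Lemma cvg0_div_powR_le h b c : 0 < c -> (h t / t `^ b) @[t --> +oo] --> 0 ->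
  \forall t \near +oo, `|h t| <= c * t `^ b.
Proof.
move=> c0 /cvgr0Pnorm_le /(_ c c0) h_small; near=> t.
rewrite -ler_norm_div_powR; last exact: (@lt_le_trans _ _ 1).
by near: t.
Unshelve. all: end_near. Qed.

Lemma cvg0_div_powR h b : 0 <= b ->
  h t @[t --> +oo] --> 0 -> (h t / t `^ b) @[t --> +oo] --> 0.
Proof.
move=> b0 /cvgr0Pnorm_le h0; apply/cvgr0Pnorm_le => eps eps0; near=> t.
have t1 : 1 <= t by [].
rewrite ler_norm_div_powR; last exact: lt_le_trans t1.
apply: (@le_trans _ _ (eps * t `^ 0)).
  by rewrite powRr0 mulr1; near: t; exact: h0.
by rewrite ler_pM2l //; exact: ler_powR.
Unshelve. all: end_near. Qed.

Lemma expR_cvg0_of_le (X : R -> R) (C a : R) : 0 < a ->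
  (\forall t \near +oo, X t <= C - a * ln t) -> expR (X t) @[t --> +oo] --> 0.
Proof.
move=> a0 X_le; apply/cvgr0Pnorm_le => eps eps0; near=> t.
have t0 : 0 < t by apply: (@lt_le_trans _ _ 1).
rewrite gtr0_norm ?expR_gt0 // -[eps]lnK ?posrE // ler_expR.
have : (C - ln eps) / a <= ln t.
  by rewrite -[X in X <= _]expRK ler_ln ?posrE ?expR_gt0.
rewrite ler_pdivrMr //.
have : X t <= C - a * ln t by near: t.
lra.
Unshelve. all: end_near. Qed.

Lemma expR_not_cvg0_of_ge (X : R -> R) (C : R) :
  (\forall t \near +oo, C <= X t) -> ~ expR (X t) @[t --> +oo] --> 0.
Proof.
move=> X_ge /cvgr0Pnorm_le /(_ (expR C / 2)) X_small.
near +oo_ R => t.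
have : `|expR (X t)| <= expR C / 2.
  by near: t; apply: X_small; rewrite divr_gt0 ?expR_gt0.
have : expR C <= expR (X t) by rewrite ler_expR; near: t.
by rewrite gtr0_norm ?expR_gt0 //; have := expR_gt0 C; lra.
Unshelve. all: end_near. Qed.

Lemma increment_le_of_derive_le g h dg dh T :
  (forall t, T <= t -> is_derive t 1 g (dg t)) ->
  (forall t, T <= t -> is_derive t 1 h (dh t)) ->
  (forall t, T <= t -> dg t <= dh t) ->
  forall x y, T <= x -> x <= y -> g y - g x <= h y - h x.
Proof.
move=> Dg Dh le_dgh x y Tx; rewrite le_eqVlt => /predU1P[->|xy].
  by rewrite !subrr.
have D z : T <= z -> is_derive z 1 (h - g) (dh z - dg z).
  by move=> Tz; apply: is_deriveB; [exact: Dh | exact: Dg].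
have T_cc z : z \in `[x, y] -> T <= z.
  by rewrite in_itv /= => /andP[/(le_trans Tx)].
have T_oo z : z \in `]x, y[ -> T <= z.
  by rewrite in_itv /= => /andP[/ltW /(le_trans Tx)].
have cont : {within `[x, y], continuous (h - g)}.
  by apply: derivable_within_continuous => z /T_cc /D [].
have [z /T_oo Tz E] := MVT xy (fun z zxy => D z (T_oo z zxy)) cont.
suff : 0 <= (h y - g y) - (h x - g x) by lra.
rewrite -[h y - g y]/((h - g) y) -[h x - g x]/((h - g) x) E.
by rewrite mulr_ge0 // subr_ge0 ?(ltW xy) // le_dgh.
Qed.

Lemma is_derive_scaled_powR c b t : 0 < t -> b != 0 ->
  is_derive t 1 (fun s => c / b * s `^ b) (c * t `^ (b - 1)).
Proof.
move=> t0 b0; have D := is_deriveZ (c / b) (is_derive1_powR b t0).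
by apply: is_derive_eq D _; rewrite -[_ *: _]/(_ * _) mulrA divfK.
Qed.

Lemma norm_increment_le_powR g dg b c T : 0 < T -> b != 0 ->
  (forall t, T <= t -> is_derive t 1 g (dg t)) ->
  (forall t, T <= t -> `|dg t| <= c * t `^ (b - 1)) ->
  forall x y, T <= x -> x <= y -> `|g y - g x| <= c / b * (y `^ b - x `^ b).
Proof.
move=> T0 b0 Dg dg_le x y Tx xy.
have Dp t : T <= t -> is_derive t 1 (fun s => c / b * s `^ b) (c * t `^ (b - 1)).
  by move=> Tt; apply: is_derive_scaled_powR => //; exact: lt_le_trans Tt.
have le_g := increment_le_of_derive_le Dg Dp
  (fun t Tt => (ler_normlP _ _ (dg_le t Tt)).2) Tx xy.
have le_Ng : - g y - - g x <= c / b * y `^ b - c / b * x `^ b :=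
  @increment_le_of_derive_le (- g) _ (fun t => - dg t) _ T
  (fun t Tt => is_deriveN (Dg t Tt)) Dp
  (fun t Tt => (ler_normlP _ _ (dg_le t Tt)).1) _ _ Tx xy.
by rewrite ler_norml mulrBr; apply/andP; split; lra.
Qed.

Lemma derivable_neq0_sign g T :
  (forall t, T <= t -> derivable g t 1) -> (forall t, T <= t -> g t != 0) ->
  (forall t, T <= t -> 0 < g t) \/ (forall t, T <= t -> g t < 0).
Proof.
move=> Dg g_neq0.
wlog gT0 : g Dg g_neq0 / 0 < g T => [wlog_gT0|].
  have [gT0|gT0] := ltP 0 (g T); first exact: wlog_gT0.
  have DNg t : T <= t -> derivable (fun s => - g s) t 1 by move/Dg/derivableN.
  have Ng_neq0 t : T <= t -> - g t != 0 by move/g_neq0; rewrite oppr_eq0.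
  have NgT0 : 0 < - g T by rewrite oppr_gt0 lt_neqAle gT0 g_neq0.
  have [Ng_pos|Ng_neg] := wlog_gT0 _ DNg Ng_neq0 NgT0.
    by right=> t /Ng_pos; rewrite oppr_gt0.
  by left=> t /Ng_neg; rewrite oppr_lt0.
left=> t Tt; rewrite ltNge; apply/negP => gt0.
have cont : {within `[T, t], continuous g}.
  by apply: derivable_within_continuous => z; rewrite in_itv /= => /andP[/Dg].
have [|z] := @IVT _ g T t 0 Tt cont.
  by rewrite ge_min le_max gt0 (ltW gT0) orbT.
by rewrite in_itv /= => /andP[/g_neq0/eqP].
Qed.

Lemma nondecreasing_cvg_or_cvgy g T :
  (forall x y, T <= x -> x <= y -> g x <= g y) ->
  (exists r : R, g t @[t --> +oo] --> r) \/ g t @[t --> +oo] --> +oo.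
Proof.
move=> g_ndecr.
have [[B gB]|g_unbounded] := pselect (exists B, forall t, T <= t -> g t <= B).
  left; pose G t := g (Num.max t T).
  have G_ndecr : {homo G : x y / x <= y}.
    move=> x y xy; apply: g_ndecr; first by rewrite le_max lexx orbT.
    by rewrite ge_max !le_max xy lexx !orbT.
  have G_ub : has_ubound (range G).
    by exists B => _ [x _ <-]; apply: gB; rewrite le_max lexx orbT.
  exists (sup (range G)); apply: cvg_trans (nondecreasing_cvgr G_ndecr G_ub).
  by apply: near_eq_cvg; near=> t; rewrite /G max_l.
right; apply/cvgryPge => A.
have [t [Tt At]] : exists t, T <= t /\ A < g t.
  apply: contra_notP g_unbounded => none; exists A => t Tt.
  by rewrite leNgt; apply/negP => At; apply: none; exists t.
by near=> x; apply: le_trans (ltW At) (g_ndecr _ _ Tt _).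
Unshelve. all: end_near. Qed.

Lemma derive_ge0_cvg_or_cvgy g dg :
  (\forall t \near +oo, is_derive (t : R) 1 g (dg t)) ->
  (\forall t \near +oo, 0 <= dg t) ->
  (exists r : R, g t @[t --> +oo] --> r) \/ g t @[t --> +oo] --> +oo.
Proof.
move=> Dg dg_ge0; near +oo_ R => T.
apply: (@nondecreasing_cvg_or_cvgy _ T) => x y Tx xy.
have := @increment_le_of_derive_le (cst 0) g (cst 0) dg T _ _ _ x y Tx xy.
rewrite subrr subr_ge0; apply=> t Tt; first exact: is_derive_cst.
  by move: t Tt; near: T; apply: near_pinfty_ge_all.
by move: t Tt; near: T; apply: near_pinfty_ge_all.
Unshelve. all: end_near. Qed.

Lemma derive_ge0_pos_not_cvg0 g dg :
  (\forall t \near +oo, is_derive (t : R) 1 g (dg t)) ->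
  (\forall t \near +oo, 0 <= dg t) -> (\forall t \near +oo, 0 < g t) ->
  ~ g t @[t --> +oo] --> 0.
Proof.
move=> Dg dg_ge0 g_gt0 /cvgr0Pnorm_le g_small.
near +oo_ R => T; have gT0 : 0 < g T by near: T.
have g_ndecr y : T <= y -> g T <= g y.
  move=> Ty; rewrite -subr_ge0 -(subrr 0).
  apply: (@increment_le_of_derive_le (cst 0) g (cst 0) dg T _ _ _ T y (lexx T) Ty).
  - by move=> t _; exact: is_derive_cst.
  - by near: T; apply: near_pinfty_ge_all.
  - by near: T; apply: near_pinfty_ge_all.
near +oo_ R => y.
have : `|g y| <= g T / 2 by near: y; apply: g_small; rewrite divr_gt0.
have Ty : T <= y by [].
have := g_ndecr y Ty; have := ler_norm (g y); lra.
Unshelve. all: end_near. Qed.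

Lemma derive_ge_powR_not_o_powR g dg b m : 0 < b -> 0 < m ->
  (\forall t \near +oo, is_derive (t : R) 1 g (dg t)) ->
  (\forall t \near +oo, m * t `^ (b - 1) <= dg t) ->
  ~ (g t / t `^ b) @[t --> +oo] --> 0.
Proof.
move=> b0 m0 Dg dg_ge /cvgr0Pnorm_le g_small.
set mu := m / b; have mu0 : 0 < mu by rewrite divr_gt0.
near +oo_ R => T; have T0 : 0 < T by apply: (@lt_le_trans _ _ 1).
have g_incr y : T <= y -> mu * y `^ b - mu * T `^ b <= g y - g T.
  apply: (@increment_le_of_derive_le (fun s => m / b * s `^ b) g
    (fun s => m * s `^ (b - 1)) dg T _ _ _ T y (lexx T)).
  - move=> t Tt; apply: is_derive_scaled_powR; first exact: lt_le_trans Tt.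
    exact: lt0r_neq0.
  - by near: T; apply: near_pinfty_ge_all.
  - by near: T; apply: near_pinfty_ge_all.
near +oo_ R => y; have y0 : 0 < y by apply: (@lt_le_trans _ _ 1).
have Ty : T <= y by [].
have gy_le : g y <= mu * y `^ b / 4.
  have : `|g y / y `^ b| <= mu / 4.
    by near: y; apply: g_small; rewrite divr_gt0.
  by rewrite ler_norm_div_powR // => /ler_normlW; rewrite mulrAC.
have y_large : 4 * `|g T - mu * T `^ b| <= mu * y `^ b.
  suff : 4 * `|g T - mu * T `^ b| / mu <= y `^ b.
    by rewrite ler_pdivrMr // [_ * mu]mulrC.
  by near: y; apply: (cvgryPge _).1; exact: powR_cvgy.
have := g_incr y Ty; have := ler_norm (- (g T - mu * T `^ b)); rewrite normrN.
have := mulr_gt0 mu0 (powR_gt0 b y0); lra.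
Unshelve. all: end_near. Qed.

Lemma o_powR_of_derive_o_powR g dg b : 0 < b ->
  (\forall t \near +oo, is_derive (t : R) 1 g (dg t)) ->
  (dg t / t `^ (b - 1)) @[t --> +oo] --> 0 -> (g t / t `^ b) @[t --> +oo] --> 0.
Proof.
move=> b0 Dg dg_o; apply/cvgr0Pnorm_le => eps eps0.
have eps20 : 0 < eps / 2 by rewrite divr_gt0.
near +oo_ R => T; have T0 : 0 < T by apply: (@lt_le_trans _ _ 1).
have g_incr y : T <= y -> `|g y - g T| <= eps / 2 * (y `^ b - T `^ b).
  move=> Ty; rewrite -[eps / 2](mulfK (lt0r_neq0 b0)).
  apply: (@norm_increment_le_powR g dg _ _ _ T0 (lt0r_neq0 b0) _ _ _ _ (lexx T) Ty).
    by near: T; apply: near_pinfty_ge_all.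
  near: T; apply: near_pinfty_ge_all; apply: cvg0_div_powR_le dg_o.
  by rewrite mulr_gt0.
near=> y; have y0 : 0 < y by apply: (@lt_le_trans _ _ 1).
rewrite ler_norm_div_powR //.
have : 2 * `|g T| / eps <= y `^ b.
  by near: y; apply: (cvgryPge _).1; exact: powR_cvgy.
rewrite ler_pdivrMr // => gT_le.
have Ty : T <= y by [].
have := g_incr y Ty; have := lerB_dist (g y) (g T).
have := mulr_ge0 (ltW eps20) (powR_ge0 T b); rewrite mulrBr; lra.
Unshelve. all: end_near. Qed.

Lemma bounded_of_derive_le_powR g dg b c : b < 0 -> 0 <= c ->
  (\forall t \near +oo, is_derive (t : R) 1 g (dg t)) ->
  (\forall t \near +oo, `|dg t| <= c * t `^ (b - 1)) ->
  exists B, \forall t \near +oo, `|g t| <= B.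
Proof.
move=> b0 c0 Dg dg_le; near +oo_ R => T.
have T0 : 0 < T by apply: (@lt_le_trans _ _ 1).
have incr y : T <= y -> `|g y - g T| <= c / b * (y `^ b - T `^ b).
  apply: (@norm_increment_le_powR g dg _ _ _ T0 (ltr0_neq0 b0) _ _ _ _ (lexx T)).
    by near: T; apply: near_pinfty_ge_all.
  by near: T; apply: near_pinfty_ge_all.
exists (`|g T| - c / b * T `^ b); near=> y.
have cb : c / b <= 0 by rewrite mulr_ge0_le0 // ltW // invr_lt0.
have Ty : T <= y by [].
have := incr y Ty; have := lerB_dist (g y) (g T).
have := mulr_le0_ge0 cb (powR_ge0 y b); rewrite mulrBr; lra.
Unshelve. all: end_near. Qed.

Lemma norm_le_powR_of_derive_le_powR g dg b c : b < 0 -> 0 <= c ->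
  (\forall t \near +oo, is_derive (t : R) 1 g (dg t)) ->
  (\forall t \near +oo, `|dg t| <= c * t `^ (b - 1)) ->
  g t @[t --> +oo] --> 0 ->
  \forall t \near +oo, `|g t| <= - (c / b) * t `^ b.
Proof.
move=> b0 c0 Dg dg_le /cvgr0Pnorm_le g_small; near=> x.
have x0 : 0 < x by apply: (@lt_le_trans _ _ 1).
have incr y : x <= y -> `|g y - g x| <= c / b * (y `^ b - x `^ b).
  apply: (@norm_increment_le_powR g dg _ _ _ x0 (ltr0_neq0 b0) _ _ _ _ (lexx x)).
    by near: x; apply: near_pinfty_ge_all.
  by near: x; apply: near_pinfty_ge_all.
have cb : c / b <= 0 by rewrite mulr_ge0_le0 // ltW // invr_lt0.
rewrite leNgt; apply/negP => gx_gt.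
near +oo_ R => y; have xy : x <= y by [].
have : `|g y| <= (`|g x| + c / b * x `^ b) / 2.
  by near: y; apply: g_small; rewrite divr_gt0 //; lra.
have := incr y xy; have := lerB_dist (g x) (g y); rewrite distrC.
have := mulr_le0_ge0 cb (powR_ge0 y b); rewrite mulrBr; lra.
Unshelve. all: end_near. Qed.

Lemma mul_powR_le_of_log_derive_le g dg N : 0 < N ->
  (\forall t \near +oo, is_derive (t : R) 1 g (dg t)) ->
  (\forall t \near +oo, t * dg t <= - N * g t) ->
  exists K, \forall t \near +oo, g t * t `^ N <= K.
Proof.
move=> N0 Dg dg_le; near +oo_ R => T.
have T0 : 0 < T by apply: (@lt_le_trans _ _ 1).
have DgT : forall t, T <= t -> is_derive t 1 g (dg t).
  by near: T; apply: near_pinfty_ge_all.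
have dg_leT : forall t, T <= t -> t * dg t <= - N * g t.
  by near: T; apply: near_pinfty_ge_all.
exists (g T * T `^ N); near=> y.
suff : (g * (fun s => s `^ N)) y - (g * (fun s => s `^ N)) T <= cst 0 y - cst 0 T.
  by rewrite /= subrr subr_le0.
apply: (increment_le_of_derive_le _ _ _ (lexx T)) => [t Tt|t Tt|t Tt|//].
- exact: is_deriveM (DgT t Tt) (is_derive1_powR N (lt_le_trans T0 Tt)).
- exact: is_derive_cst.
have t0 : 0 < t by exact: lt_le_trans Tt.
rewrite -[_ *: _]/(_ * _) -[_ *: dg t]/(_ * _) -(mulr_powRB1 (ltW t0) N0).
have -> : g t * (N * t `^ (N - 1)) + t * t `^ (N - 1) * dg t =
    t `^ (N - 1) * (N * g t + t * dg t) by ring.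
by rewrite mulr_ge0_le0 ?powR_ge0 //; have := dg_leT t Tt; lra.
Unshelve. all: end_near. Qed.

Lemma log_derive_le_not_ge_powR g dg a m N : 0 < m -> 0 < N -> 0 < a + N ->
  (\forall t \near +oo, is_derive (t : R) 1 g (dg t)) ->
  (\forall t \near +oo, t * dg t <= - N * g t) ->
  ~ \forall t \near +oo, m * t `^ a <= g t.
Proof.
move=> m0 N0 aN0 Dg dg_le g_ge.
have [K gK] := mul_powR_le_of_log_derive_le N0 Dg dg_le.
near +oo_ R => t; have t0 : 0 < t by apply: (@lt_le_trans _ _ 1).
have : m * t `^ (a + N) <= K.
  rewrite powRD ?gt_eqF ?implybT // mulrA.
  apply: le_trans (_ : g t * t `^ N <= K); last by near: t.
  by rewrite ler_wpM2r ?powR_ge0 //; near: t.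
have : (`|K| + 1) / m <= t `^ (a + N).
  by near: t; apply: (cvgryPge _).1; exact: powR_cvgy.
by rewrite ler_pdivrMr // [_ * m]mulrC; have := ler_norm K; lra.
Unshelve. all: end_near. Qed.

Lemma le_growth_refl (u : R -> R) :
  (\forall t \near +oo, u t != 0) -> le_growth u u.
Proof.
move=> u_neq0; exists 1%E; split => //.
apply: cvg_trans (near_eq_cvg _) (cvg_cst _); near=> t.
by rewrite divff ?normr1 //; near: t.
Unshelve. all: end_near. Qed.

Lemma dominates_powR_not_o_powR g delta e : 0 < e -> e <= delta ->
  dominates g (fun t => t `^ delta) -> ~ (g t / t `^ e) @[t --> +oo] --> 0.
Proof.
move=> e0 e_delta [C g_dom] g_o.
set C1 := `|C| + 1; have C10 : 0 < C1 by rewrite ltr_wpDl.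
have eps0 : 0 < (2 * C1)^-1 by rewrite invr_gt0 mulr_gt0.
near +oo_ R => t; have t1 : 1 <= t by [].
have t_delta0 : 0 < t `^ delta by rewrite powR_gt0 // (lt_le_trans ltr01).
have dom : t `^ delta <= C * `|g t| by rewrite -(gtr0_norm t_delta0); near: t.
have g_le : `|g t| <= (2 * C1)^-1 * t `^ e by near: t; exact: cvg0_div_powR_le.
have CC1 : C * `|g t| <= C1 * `|g t|.
  by apply: ler_wpM2r => //; rewrite (le_trans (ler_norm C)) // lerDl.
have te : t `^ e <= t `^ delta by exact: ler_powR.
have := ler_wpM2l (ltW C10) g_le.
have -> : C1 * ((2 * C1)^-1 * t `^ e) = t `^ e / 2 by field; rewrite gt_eqF.
lra.
Unshelve. all: end_near. Qed.

End AnalysisAtInfinity.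

Lemma exists_switch (P : nat -> Prop) n : ~ P 0 -> P n -> exists j, ~ P j /\ P j.+1.
Proof.
move=> NP0; elim: n => [//|n IH] Pn1.
by have [/IH|NPn] := pselect (P n); last by exists n.
Qed.

Section HardyField.
Variables (R : realType) (H : set (R -> R)).
Hypotheses (hH : hardy_field H) (hLE : contains_LE H).
Implicit Types (g h : R -> R).

Lemma hardy_near_eq g h : H g -> (\forall t \near +oo, g t = h t) -> H h.
Proof. exact: hf_germ. Qed.

Lemma hardy_id : H id.
Proof. exact: (hLE (e := LE_id R)). Qed.

Lemma hardy_powR a : H (fun t => t `^ a).
Proof.
have wd : LE_wd (LE_exp (LE_mul (LE_cst a) (LE_ln (LE_id R)))).
  by do 2!split=> //; near=> t; apply: (@lt_le_trans _ _ 1) => /=.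
apply: (hardy_near_eq (hLE wd)); near=> t.
by rewrite /= /powR gt_eqF //; apply: (@lt_le_trans _ _ 1).
Unshelve. all: end_near. Qed.

Lemma hardy_derive1 g : H g -> H (derive1 g).
Proof. by case/(hf_diff hH). Qed.

Lemma hardy_derive1n g n : H g -> H (derive1n n g).
Proof. by move=> Hg; elim: n => [|n IH] //=; exact: hardy_derive1. Qed.

Lemma hardy_is_derive g : H g ->
  \forall t \near +oo, is_derive (t : R) 1 g (derive1 g t).
Proof.
move=> /(hf_diff hH) [Dg _]; apply: filterS Dg => t Dgt.
by rewrite derive1E; exact: derivableP.
Qed.

Lemma hardy_inv g : H g -> (\forall t \near +oo, g t != 0) -> H (fun t => (g t)^-1).
Proof.
move=> Hg g_neq0.
have [|ginv Hginv ginvE] := hf_inv hH Hg.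
  move=> g0; have [t [/= gt0 /eqP]] := filter_ex (filterI g0 g_neq0).
  by rewrite gt0.
apply: (hardy_near_eq Hginv); near=> t.
have : g t * ginv t = 1 by near: t.
by move/(congr1 (fun x => (g t)^-1 * x)); rewrite mulKf ?mulr1 //; near: t.
Unshelve. all: end_near. Qed.

Lemma hardy_div g h : H g -> H h -> (\forall t \near +oo, h t != 0) ->
  H (fun t => g t / h t).
Proof. by move=> Hg Hh h_neq0; apply: (hf_mul hH Hg); exact: hardy_inv. Qed.

Lemma hardy_div_powR g a : H g -> H (fun t => g t / t `^ a).
Proof.
move=> Hg; apply: hardy_div (hardy_powR a) _ => //; near=> t.
by rewrite gt_eqF // powR_gt0 //; apply: (@lt_le_trans _ _ 1).
Unshelve. all: end_near. Qed.

Lemma hardy_sign g : H g -> (\forall t \near +oo, g t = 0) \/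
  (\forall t \near +oo, 0 < g t) \/ (\forall t \near +oo, g t < 0).
Proof.
move=> Hg; have [|g_not0] := pselect (\forall t \near +oo, g t = 0); first by left.
right; have [ginv _ ginvE] := hf_inv hH Hg g_not0.
have [Dg _] := hf_diff hH Hg.
have g_neq0 : \forall t \near +oo, g t != 0.
  apply: filterS ginvE => t gt1; apply/eqP => g0; move: gt1.
  by rewrite g0 mul0r => /eqP; rewrite eq_sym oner_eq0.
near +oo_ R => T.
have DgT : forall t, T <= t -> derivable g t 1.
  by near: T; apply: near_pinfty_ge_all.
have g_neq0T : forall t, T <= t -> g t != 0.
  by near: T; apply: near_pinfty_ge_all.
have [g_pos|g_neg] := derivable_neq0_sign DgT g_neq0T.
  by left; near=> t; apply: g_pos.
by right; near=> t; apply: g_neg.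
Unshelve. all: end_near. Qed.

Lemma hardy_norm g : H g -> H (fun t => `|g t|).
Proof.
move=> Hg; have [g0|[g_gt0|g_lt0]] := hardy_sign Hg.
- by apply: (hardy_near_eq Hg); apply: filterS g0 => t ->; rewrite normr0.
- by apply: (hardy_near_eq Hg); apply: filterS g_gt0 => t /gtr0_norm ->.
- by apply: (hardy_near_eq (hf_opp hH Hg)); apply: filterS g_lt0 => t /ltr0_norm ->.
Qed.

Lemma hardy_limit g : H g -> (exists r : R, g t @[t --> +oo] --> r) \/
  g t @[t --> +oo] --> +oo \/ g t @[t --> +oo] --> -oo.
Proof.
move=> Hg; have Dg := hardy_is_derive Hg.
have [g'0|[g'_gt0|g'_lt0]] := hardy_sign (hardy_derive1 Hg).
- have g'_ge0 : \forall t \near +oo, 0 <= derive1 g t.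
    by apply: filterS g'0 => t ->.
  by have [] := derive_ge0_cvg_or_cvgy Dg g'_ge0; [left | right; left].
- have g'_ge0 : \forall t \near +oo, 0 <= derive1 g t.
    by apply: filterS g'_gt0 => t /ltW.
  by have [] := derive_ge0_cvg_or_cvgy Dg g'_ge0; [left | right; left].
have DNg : \forall t \near +oo, is_derive (t : R) 1 (- g) (- derive1 g t).
  by apply: filterS Dg => t /is_deriveN.
have Ng'_ge0 : \forall t \near +oo, 0 <= - derive1 g t.
  by apply: filterS g'_lt0 => t; rewrite oppr_ge0 => /ltW.
have [[r Ngr]|Ngy] := derive_ge0_cvg_or_cvgy DNg Ng'_ge0.
  by left; exists (- r); rewrite -[g]opprK; exact: cvgN.
by right; right; apply/cvgNry.
Qed.

Lemma hardy_cvg0_or_away g : H g -> g t @[t --> +oo] --> 0 \/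
  exists2 m, 0 < m &
    (\forall t \near +oo, m <= g t) \/ (\forall t \near +oo, g t <= - m).
Proof.
move=> Hg; have [[r gr]|[gy|gNy]] := hardy_limit Hg; last 2 first.
- by right; exists 1 => //; left; exact: (cvgryPge g).1 gy 1.
- by right; exists 1 => //; right; exact: (cvgrNyPle g).1 gNy (- 1).
have [r0|r_neq0] := eqVneq r 0; first by left; rewrite -r0.
right.
have r20 : 0 < `|r| / 2 by rewrite divr_gt0 ?normr_gt0.
exists (`|r| / 2) => //.
have near_r : \forall t \near +oo, `|r - g t| <= `|r| / 2.
  by move/cvgrPdist_le : gr; apply.
move: r_neq0; rewrite neq_lt => /orP[r_lt0|r_gt0]; [right|left].
  by apply: filterS near_r => t; rewrite (ltr0_norm r_lt0) ler_norml; lra.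
by apply: filterS near_r => t; rewrite (gtr0_norm r_gt0) ler_norml; lra.
Qed.

Lemma hardy_le_growth u v : H (fun t => v t / u t) ->
  ~ (v t / u t) @[t --> +oo] --> 0 -> le_growth u v.
Proof.
move=> Hq q_not0; have [[r qr]|[qy|qNy]] := hardy_limit Hq.
- exists (`|r|%:E); split.
    by rewrite eqe normr_eq0; apply/eqP => r0; apply: q_not0; rewrite -r0.
  by apply: cvg_EFin; [exact: nearW | exact: cvg_norm].
- exists +oo%E; split => //; apply/cvgeryP/cvgryPge => A.
  by apply: filterS ((cvgryPge _).1 qy A) => t /le_trans; apply; exact: ler_norm.
- exists +oo%E; split => //; apply/cvgeryP/cvgryPge => A.
  apply: filterS ((cvgrNyPle _).1 qNy (- A)) => t.
  by rewrite lerNr => /le_trans; apply; rewrite -normrN ler_norm.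
Qed.

Lemma hardy_derive_o_powR g b : 0 < b -> H g ->
  (g t / t `^ b) @[t --> +oo] --> 0 ->
  (derive1 g t / t `^ (b - 1)) @[t --> +oo] --> 0.
Proof.
move=> b0 Hg g_o.
have [//|[m m0 [q_ge|q_le]]] :=
  hardy_cvg0_or_away (hardy_div_powR (b - 1) (hardy_derive1 Hg)); exfalso.
  apply: (derive_ge_powR_not_o_powR b0 m0 (hardy_is_derive Hg) _ g_o).
  near=> t; rewrite -ler_pdivlMr; first by near: t.
  by apply: powR_gt0; apply: (@lt_le_trans _ _ 1).
apply: (@derive_ge_powR_not_o_powR _ (- g) (fun t => - derive1 g t) b m b0 m0).
- by apply: filterS (hardy_is_derive Hg) => t /is_deriveN.
- near=> t; rewrite lerNr -mulNr -ler_pdivrMr; first by near: t.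
  by apply: powR_gt0; apply: (@lt_le_trans _ _ 1).
- have -> : (fun t => (- g) t / t `^ b) = - (fun t => g t / t `^ b).
    by apply/funext => t; rewrite /= mulNr.
  by rewrite -oppr0; exact: cvgN.
Unshelve. all: end_near. Qed.

Lemma hardy_o_or_ge_powR g b : H g -> (g t / t `^ b) @[t --> +oo] --> 0 \/
  exists2 m, 0 < m & \forall t \near +oo, m * t `^ b <= `|g t|.
Proof.
move=> Hg.
have [|[m m0 away]] := hardy_cvg0_or_away (hardy_div_powR b Hg); first by left.
right; exists m => //.
have q_away : \forall t \near +oo, m <= `|g t / t `^ b|.
  case: away => away; apply: filterS away => t.
    by move/le_trans; apply; exact: ler_norm.
  by rewrite lerNr => /le_trans; apply; rewrite -normrN ler_norm.
near=> t; rewrite -ger_norm_div_powR; first by near: t.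
exact: (@lt_le_trans _ _ 1).
Unshelve. all: end_near. Qed.

Lemma hardy_derive1n_bounded g j B : H g ->
  (\forall t \near +oo, `|derive1n j g t| <= B) ->
  exists M, \forall t \near +oo, `|g t| <= M * t `^ j%:R.
Proof.
elim: j g => [|j IH] g Hg g_bd.
  by exists B; apply: filterS g_bd => t; rewrite powRr0 mulr1.
rewrite /derive1n iterSr in g_bd.
have [M g'_le] := IH _ (hardy_derive1 Hg) g_bd.
near +oo_ R => T; have T1 : 1 <= T by [].
have T0 : 0 < T by apply: lt_le_trans T1.
have j10 : (j.+1%:R : R) != 0 by rewrite pnatr_eq0.
set c := `|M| / j.+1%:R; have c0 : 0 <= c by rewrite divr_ge0.
have incr y : T <= y -> `|g y - g T| <= c * (y `^ j.+1%:R - T `^ j.+1%:R).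
  apply: (@norm_increment_le_powR _ g (derive1 g) _ _ _ T0 j10 _ _ _ _ (lexx T)).
    by near: T; apply: near_pinfty_ge_all; exact: hardy_is_derive.
  rewrite -natr1 addrK; near: T; apply: near_pinfty_ge_all.
  apply: filterS g'_le => t /le_trans; apply.
  by rewrite ler_wpM2r ?powR_ge0 ?ler_norm.
exists (`|g T| + c); near=> y.
have y1 : 1 <= y `^ j.+1%:R.
  by rewrite powR_mulrn ?exprn_ege1 //; apply: le_trans T1 _.
have Ty : T <= y by [].
have := incr y Ty; have := lerB_dist (g y) (g T); rewrite mulrBr mulrDl.
have := mulr_ge0 c0 (powR_ge0 T j.+1%:R); have := ler_peMr (normr_ge0 (g T)) y1.
lra.
Unshelve. all: end_near. Qed.

Lemma pos_log_derive_bound g dg a m : H (fun t => t * dg t / g t) ->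
  (\forall t \near +oo, is_derive (t : R) 1 g (dg t)) ->
  (\forall t \near +oo, 0 < g t) -> g t @[t --> +oo] --> 0 ->
  0 < m -> (\forall t \near +oo, m * t `^ a <= g t) ->
  exists2 M, 0 < M & \forall t \near +oo, t * `|dg t| <= M * g t.
Proof.
move=> Hq Dg g_gt0 g_cvg0 m0 g_ge.
have [[r qr]|[qy|qNy]] := hardy_limit Hq; last 2 first.
- exfalso; apply: (derive_ge0_pos_not_cvg0 Dg _ g_gt0 g_cvg0); near=> t.
  have : 0 <= t * dg t / g t by near: t; exact: (cvgryPge _).1 qy 0.
  have gt0 : 0 < g t by near: t.
  by rewrite pmulr_lge0 ?invr_gt0 // pmulr_rge0 //; apply: (@lt_le_trans _ _ 1).
- exfalso; have := ler_norm (- a); rewrite normrN => Na.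
  apply: (@log_derive_le_not_ge_powR _ g dg a m (`|a| + 1) m0 _ _ Dg _ g_ge).
  + by rewrite ltr_wpDl.
  + lra.
  near=> t; have : t * dg t / g t <= - (`|a| + 1).
    by near: t; exact: (cvgrNyPle _).1 qNy _.
  by rewrite ler_pdivrMr //; near: t.
exists (`|r| + 1); first by rewrite ltr_wpDl.
near=> t; have t0 : 0 < t by apply: (@lt_le_trans _ _ 1).
have gt0 : 0 < g t by near: t.
have : `|r - t * dg t / g t| <= 1 by near: t; move/cvgrPdist_le: qr; apply.
have := lerB_dist (t * dg t / g t) r; rewrite distrC.
rewrite normrM normfV normrM (gtr0_norm t0) (gtr0_norm gt0).
by rewrite -ler_pdivrMr //; lra.
Unshelve. all: end_near. Qed.

Lemma hardy_log_derive_bound g a m : H g -> g t @[t --> +oo] --> 0 -> 0 < m ->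
  (\forall t \near +oo, m * t `^ a <= `|g t|) ->
  exists2 M, 0 < M & \forall t \near +oo, t * `|derive1 g t| <= M * `|g t|.
Proof.
move=> Hg g_cvg0 m0 g_ge.
have g_neq0 : \forall t \near +oo, g t != 0.
  near=> t; rewrite -normr_gt0.
  apply: lt_le_trans (_ : m * t `^ a <= _); last by near: t.
  by rewrite mulr_gt0 // powR_gt0 //; apply: (@lt_le_trans _ _ 1).
have Hq : H (fun t => t * derive1 g t / g t).
  exact: hardy_div (hf_mul hH hardy_id (hardy_derive1 Hg)) Hg g_neq0.
have Dg := hardy_is_derive Hg.
have [g0|[g_gt0|g_lt0]] := hardy_sign Hg.
- by have [t [/= -> /eqP]] := filter_ex (filterI g0 g_neq0).
- have g_ge' : \forall t \near +oo, m * t `^ a <= g t.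
    by apply: filterS2 g_ge g_gt0 => t + /gtr0_norm <-.
  have [M M0 bound] := pos_log_derive_bound Hq Dg g_gt0 g_cvg0 m0 g_ge'.
  by exists M => //; apply: filterS2 bound g_gt0 => t + /gtr0_norm ->.
have HNq : H (fun t => t * - derive1 g t / (- g) t).
  by apply: (hardy_near_eq Hq); apply: nearW => t; rewrite /= mulrN invrN mulrNN.
have DNg : \forall t \near +oo, is_derive (t : R) 1 (- g) (- derive1 g t).
  by apply: filterS Dg => t /is_deriveN.
have Ng_gt0 : \forall t \near +oo, 0 < (- g) t.
  by apply: filterS g_lt0 => t; rewrite /= oppr_gt0.
have Ng_cvg0 : (- g) t @[t --> +oo] --> 0 by rewrite -oppr0; exact: cvgN.
have Ng_ge : \forall t \near +oo, m * t `^ a <= (- g) t.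
  by apply: filterS2 g_ge g_lt0 => t + /ltr0_norm E; rewrite E.
have [M M0 bound] := pos_log_derive_bound HNq DNg Ng_gt0 Ng_cvg0 m0 Ng_ge.
by exists M => //; apply: filterS2 bound g_lt0 => t + /ltr0_norm ->; rewrite normrN.
Unshelve. all: end_near. Qed.

End HardyField.

Section StronglyNonPolynomial.
Variables (R : realType) (H : set (R -> R)) (f : R -> R) (d : nat) (e : R).
Hypotheses (hH : hardy_field H) (hLE : contains_LE H) (hf : H f).
Hypothesis f_gt_pow : lt_growth (fun t => t ^+ d) f.
Hypothesis f_lt_pow : lt_growth f (fun t => t ^+ d.+1).
Hypotheses (e_gt0 : 0 < e) (e_lt1 : e < 1).
(* The only consequence of f ≫ t^delta that is used, by dominates_powR_not_o_powR. *)
Hypothesis f_not_o_powR : ~ (f t / t `^ e) @[t --> +oo] --> 0.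
Hypothesis hcomp : hardy_closed_comp H.

Local Notation F k := (derive1n k f).

Let HF k : H (F k) := hardy_derive1n hH k hf.

Lemma derive1n_o_powR j : (j <= d.+1)%N ->
  (F j t / t `^ (d.+1 - j)%:R) @[t --> +oo] --> 0.
Proof.
elim: j => [_|j IH jd].
  apply: cvg_trans f_lt_pow; apply: near_eq_cvg; near=> t.
  by rewrite subn0 powR_mulrn.
have b0 : (0 : R) < (d.+1 - j)%:R by rewrite ltr0n subn_gt0.
have := hardy_derive_o_powR hH hLE b0 (HF j) (IH (ltnW jd)).
by rewrite subSn // -natr1 addrK subSS.
Unshelve. all: end_near. Qed.

Lemma derive1n_cvg0 k : (d < k)%N -> F k t @[t --> +oo] --> 0.
Proof.
move=> dk; rewrite -(subnKC dk); elim: (k - d.+1)%N => [|i IH].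
  by have := derive1n_o_powR (leqnn d.+1); rewrite subnn addn0 mulr0n div_powRr0.
have := hardy_derive_o_powR hH hLE ltr01 (HF _) (cvg0_div_powR ler01 IH).
by rewrite subrr div_powRr0 addnS.
Qed.

Lemma f_neq0 : \forall t \near +oo, f t != 0.
Proof.
have [f0|[f_gt0|f_lt0]] := hardy_sign hH hf.
- exfalso; apply: f_not_o_powR; apply: cvg_trans (near_eq_cvg _) (cvg_cst 0).
  by apply: filterS f0 => t ->; rewrite mul0r.
- by apply: filterS f_gt0 => t /lt0r_neq0.
- by apply: filterS f_lt0 => t /ltr0_neq0.
Qed.

Lemma derive1n_unbounded j B : (j <= d)%N -> ~ \forall t \near +oo, `|F j t| <= B.
Proof.
move=> jd /(hardy_derive1n_bounded hH hf) [M f_le].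
set M1 := `|M| + 1; have M10 : 0 < M1 by rewrite ltr_wpDl.
have eps0 : 0 < (2 * M1)^-1 by rewrite invr_gt0 mulr_gt0.
near +oo_ R => t; have t1 : 1 <= t by [].
have td0 : 0 < t ^+ d by rewrite exprn_gt0 // (lt_le_trans ltr01).
have f_le_td : `|f t| <= M1 * t ^+ d.
  apply: (@le_trans _ _ (M * t `^ j%:R)); first by near: t.
  rewrite -powR_mulrn ?(le_trans ler01) //.
  apply: le_trans (ler_wpM2r (powR_ge0 _ _) (_ : M <= M1)) _.
    by rewrite (le_trans (ler_norm M)) // lerDl.
  by rewrite ler_pM2l //; apply: ler_powR; rewrite ?ler_nat.
have : `|t ^+ d / f t| <= (2 * M1)^-1.
  by near: t; move/cvgr0Pnorm_le: f_gt_pow; apply.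
have ft0 : 0 < `|f t| by rewrite normr_gt0; near: t; exact: f_neq0.
rewrite normrM normfV (gtr0_norm td0) ler_pdivrMr // => td_le.
have : (2 * M1)^-1 * `|f t| <= (2 * M1)^-1 * (M1 * t ^+ d).
  by rewrite ler_pM2l.
have -> : (2 * M1)^-1 * (M1 * t ^+ d) = t ^+ d / 2 by field; rewrite gt_eqF.
lra.
Unshelve. all: end_near. Qed.

Lemma derive1n_ge_powR_base : exists2 m, 0 < m &
  \forall t \near +oo, m * t `^ (e - d.+1%:R) <= `|F d.+1 t|.
Proof.
have [F_o|//] := hardy_o_or_ge_powR hH hLE (e - d.+1%:R) (HF d.+1); exfalso.
have [d0|d_gt0] := posnP d.
  move: F_o; rewrite d0 => /(o_powR_of_derive_o_powR e_gt0 (hardy_is_derive hH hf)).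
  exact: f_not_o_powR.
have b0 : e - d%:R < 0 by rewrite subr_lt0 (lt_le_trans e_lt1) // ler1n.
have [B F_bd] : exists B, \forall t \near +oo, `|F d t| <= B.
  apply: (bounded_of_derive_le_powR b0 ler01 (hardy_is_derive hH (HF d))).
  rewrite -natr1 opprD addrA in F_o.
  exact: cvg0_div_powR_le ltr01 F_o.
exact: derive1n_unbounded (leqnn d) F_bd.
Qed.

Lemma derive1n_ge_powR_succ k : (d < k)%N ->
  (exists2 m, 0 < m & \forall t \near +oo, m * t `^ (e - k%:R) <= `|F k t|) ->
  exists2 m, 0 < m & \forall t \near +oo, m * t `^ (e - k.+1%:R) <= `|F k.+1 t|.
Proof.
move=> dk [m m0 Fk_ge].
have [F_o|//] := hardy_o_or_ge_powR hH hLE (e - k.+1%:R) (HF k.+1); exfalso.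
set b := e - k%:R.
have b0 : b < 0 by rewrite subr_lt0 (lt_le_trans e_lt1) // ler1n (leq_trans _ dk).
have c0 : 0 < m / 2 * - b by rewrite mulr_gt0 ?divr_gt0 // oppr_gt0.
have Fk_le : \forall t \near +oo, `|F k t| <= - (m / 2 * - b / b) * t `^ b.
  apply: (norm_le_powR_of_derive_le_powR b0 (ltW c0) (hardy_is_derive hH (HF k))).
    by rewrite -natr1 opprD addrA in F_o; exact: cvg0_div_powR_le c0 F_o.
  exact: derive1n_cvg0.
rewrite mulrN mulNr mulfK ?ltr0_neq0 // opprK in Fk_le.
near +oo_ R => t; have t0 : 0 < t by apply: (@lt_le_trans _ _ 1).
have : m * t `^ b <= `|F k t| by near: t.
have : `|F k t| <= m / 2 * t `^ b by near: t.
have := mulr_gt0 m0 (powR_gt0 b t0); lra.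
Unshelve. all: end_near. Qed.

Lemma derive1n_ge_powR k : (d < k)%N ->
  exists2 m, 0 < m & \forall t \near +oo, m * t `^ (e - k%:R) <= `|F k t|.
Proof.
move=> dk; rewrite -(subnKC dk); elim: (k - d.+1)%N => [|i IH].
  by rewrite addn0; exact: derive1n_ge_powR_base.
by rewrite addnS; apply: derive1n_ge_powR_succ IH; rewrite ltnS leq_addr.
Qed.

Lemma derive1n_norm_gt0 k : (d < k)%N -> \forall t \near +oo, 0 < `|F k t|.
Proof.
move=> dk; have [m m0 Fk_ge] := derive1n_ge_powR dk.
near=> t; apply: lt_le_trans (_ : m * t `^ (e - k%:R) <= _); last by near: t.
by rewrite mulr_gt0 // powR_gt0 //; apply: (@lt_le_trans _ _ 1).
Unshelve. all: end_near. Qed.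

Lemma derive1n_log_derive_bound k : (d < k)%N ->
  exists2 M, 0 < M & \forall t \near +oo, t * `|F k.+1 t| <= M * `|F k t|.
Proof.
move=> dk; have [m m0 Fk_ge] := derive1n_ge_powR dk.
have := hardy_log_derive_bound hH hLE (HF k) (derive1n_cvg0 dk) m0 Fk_ge.
by rewrite derive1nS.
Qed.

Lemma ln_derive1n_ge k : (d < k)%N ->
  exists C, \forall t \near +oo, C + (e - k%:R) * ln t <= ln `|F k t|.
Proof.
move=> dk; have [m m0 Fk_ge] := derive1n_ge_powR dk.
exists (ln m); near=> t; have t0 : 0 < t by apply: (@lt_le_trans _ _ 1).
have mt0 : 0 < m * t `^ (e - k%:R) by rewrite mulr_gt0 // powR_gt0.
rewrite -ln_powR -lnM ?posrE ?powR_gt0 // ler_ln ?posrE //; first by near: t.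
by apply: lt_le_trans mt0 _; near: t.
Unshelve. all: end_near. Qed.

Lemma ln_derive1n_succ_le k : (d < k)%N ->
  exists C, \forall t \near +oo, ln t + ln `|F k.+1 t| <= C + ln `|F k t|.
Proof.
move=> dk; have [M M0 bound] := derive1n_log_derive_bound dk.
exists (ln M); near=> t; have t0 : 0 < t by apply: (@lt_le_trans _ _ 1).
have Fk0 : 0 < `|F k t| by near: t; exact: derive1n_norm_gt0.
have Fk10 : 0 < `|F k.+1 t| by near: t; apply: derive1n_norm_gt0; exact: ltnW.
rewrite -!lnM ?posrE // ler_ln ?posrE ?mulr_gt0 //; by near: t.
Unshelve. all: end_near. Qed.

Lemma ln_derive1n_le i :
  exists C, \forall t \near +oo, ln `|F (d.+1 + i) t| <= C - i%:R * ln t.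
Proof.
elim: i => [|i [C Fi_le]].
  exists 0; move/cvgr0Pnorm_le: (derive1n_cvg0 (ltnSn d)) => /(_ 1 ltr01).
  by apply: filterS => t /ln_le0; rewrite addn0 mul0r subr0.
have [LM LM_le] := ln_derive1n_succ_le (leq_addr i d.+1).
exists (LM + C); apply: filterS2 Fi_le LM_le => t.
rewrite addnS -natr1; lra.
Qed.

Definition root_scale k t := `|F k t| `^ (- (k%:R)^-1).

Lemma root_scale_expR k t : 0 < `|F k t| ->
  root_scale k t = expR (- (k%:R)^-1 * ln `|F k t|).
Proof. by move=> Fk0; rewrite /root_scale /powR gt_eqF. Qed.

Lemma root_scale_gt0 k : (d < k)%N -> \forall t \near +oo, 0 < root_scale k t.
Proof.
move=> dk; apply: filterS (derive1n_norm_gt0 dk) => t /root_scale_expR ->.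
exact: expR_gt0.
Qed.

Lemma hardy_root_scale k : (d < k)%N -> H (root_scale k).
Proof.
move=> dk; have Fk0 := derive1n_norm_gt0 dk.
have Hinv : H (fun t => `|F k t|^-1).
  apply: (hardy_inv hH (hardy_norm hH (HF k))).
  by apply: filterS Fk0 => t /lt0r_neq0.
have inv_cvgy : `|F k t|^-1 @[t --> +oo] --> +oo.
  apply/gtr0_cvgV0; first by apply: filterS Fk0 => t; rewrite invr_gt0.
  rewrite -(@normr0 _ R); apply: cvg_trans _ (cvg_norm (derive1n_cvg0 dk)).
  by apply: near_eq_cvg; apply: nearW => t; rewrite /= invrK.
apply: (hardy_near_eq hH (hcomp (hardy_powR hH hLE (k%:R^-1)) Hinv inv_cvgy)).
by apply: filterS Fk0 => t Fkt0; rewrite /root_scale /= powRVl // -powRN.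
Qed.

Lemma root_scale_ratio_cvg0 k : (d < k)%N ->
  (root_scale k t / root_scale k.+1 t) @[t --> +oo] --> 0.
Proof.
move=> dk; have k0 : (0 < k)%N by exact: leq_trans dk.
have [LM LM_le] := ln_derive1n_succ_le dk.
have [Lm Lm_ge] := ln_derive1n_ge dk.
set a := (k%:R : R)^-1; set b := (k.+1%:R : R)^-1.
have ba : b - a <= 0 by rewrite subr_le0 lef_pV2 ?posrE ?ltr0n // ler_nat.
suff : expR (- a * ln `|F k t| + b * ln `|F k.+1 t|) @[t --> +oo] --> 0.
  move=> expR_cvg0; apply: cvg_trans _ expR_cvg0; apply: near_eq_cvg.
  apply: filterS2 (derive1n_norm_gt0 dk) (derive1n_norm_gt0 (leqW dk)).
  move=> t Fk0 Fk10.
  by rewrite !root_scale_expR // -expRB /a /b; congr expR; ring.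
(* The exponent of t works out to -e/(k(k+1)), by a * k = 1 and b - a = - a * b. *)
apply: (@expR_cvg0_of_le _ _ (b * LM + (b - a) * Lm) (e * (a * b))).
  by rewrite !mulr_gt0 // invr_gt0 ltr0n.
apply: filterS2 LM_le Lm_ge => t; set x := ln `|F k t|; set y := ln `|F k.+1 t|.
set L := ln t => LMt Lmt.
have h1 : b * y <= b * (LM + x - L) by rewrite ler_pM2l ?invr_gt0 ?ltr0n //; lra.
have h2 : (b - a) * x <= (b - a) * (Lm + (e - k%:R) * L) by rewrite ler_wnM2l.
have iden : ((b - a) * (e - k%:R) - b) * L = - (e * (a * b)) * L.
  by rewrite /a /b -natr1; field; rewrite -?natr1 ?gt_eqF ?ltr0n //; lra.
lra.
Qed.

Lemma powR_div_root_scale k c : \forall t \near +oo, 0 < `|F k t| ->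
  t `^ c / root_scale k t = expR (c * ln t + (k%:R)^-1 * ln `|F k t|).
Proof.
near=> t => Fk0; have t0 : 0 < t by apply: (@lt_le_trans _ _ 1).
by rewrite root_scale_expR // /powR gt_eqF // -expRB; congr expR; ring.
Unshelve. all: end_near. Qed.

Lemma powR_div_root_scale_not_cvg0 k c : (d < k)%N -> 1 - e / k%:R <= c ->
  ~ (t `^ c / root_scale k t) @[t --> +oo] --> 0.
Proof.
move=> dk ck q_cvg0; have k0 : (0 < k)%N by exact: leq_trans dk.
have [Lm Lm_ge] := ln_derive1n_ge dk.
set a := (k%:R : R)^-1; have a0 : 0 < a by rewrite invr_gt0 ltr0n.
apply: (@expR_not_cvg0_of_ge _ (fun t => c * ln t + a * ln `|F k t|) (a * Lm)).
  near=> t; have : Lm + (e - k%:R) * ln t <= ln `|F k t| by near: t.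
  have L0 : 0 <= ln t by apply: ln_ge0.
  have iden : a * (e - k%:R) = a * e - 1 by rewrite mulrBr mulVf // pnatr_eq0 -lt0n.
  have : 0 <= (c + a * e - 1) * ln t.
    by rewrite mulr_ge0 //; move: ck; rewrite /a mulrC; lra.
  move=> h1 h2; have := ler_wpM2l (ltW a0) h2; rewrite mulrDr mulrA iden; lra.
apply: cvg_trans _ q_cvg0; apply: near_eq_cvg.
by apply: filterS2 (powR_div_root_scale k c) (derive1n_norm_gt0 dk) => t E /E.
Unshelve. all: end_near. Qed.

Lemma powR_div_root_scale_cvg0 i c : c < i%:R / (d.+1 + i)%:R ->
  (t `^ c / root_scale (d.+1 + i) t) @[t --> +oo] --> 0.
Proof.
move=> ci; have dk : (d < d.+1 + i)%N by rewrite ltnS leq_addr.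
have [C C_le] := ln_derive1n_le i.
set a := ((d.+1 + i)%:R : R)^-1; have a0 : 0 < a by rewrite invr_gt0 ltr0n.
have aic : 0 < a * i%:R - c by move: ci; rewrite /a mulrC; lra.
suff : expR (c * ln t + a * ln `|F (d.+1 + i) t|) @[t --> +oo] --> 0.
  move=> expR_cvg0; apply: cvg_trans _ expR_cvg0; apply: near_eq_cvg.
  by apply: filterS2 (powR_div_root_scale _ c) (derive1n_norm_gt0 dk) => t E /E.
apply: (@expR_cvg0_of_le _ _ (a * C) (a * i%:R - c)) => //.
apply: filterS C_le => t Ct.
by have := ler_wpM2l (ltW a0) Ct; rewrite mulrBr mulrA; lra.
Qed.

Lemma root_scale_in_S_class k : (d < k)%N -> S_class H f k (root_scale k).
Proof.
move=> dk; split; first exact: hardy_root_scale.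
split; last exact: root_scale_ratio_cvg0.
by apply: le_growth_refl; apply: filterS (root_scale_gt0 dk) => t /lt0r_neq0.
Qed.

Lemma powR_in_S_class c : 1 - e / d.+1%:R <= c -> c < 1 ->
  exists k, F k t @[t --> +oo] --> 0 /\ S_class H f k (fun t => t `^ c).
Proof.
move=> c_ge c_lt1.
have [i ci] : exists i, c < i%:R / (d.+1 + i)%:R.
  have c1 : 0 < 1 - c by rewrite subr_gt0.
  have c_ge0 : 0 <= c.
    have : e / d.+1%:R < 1.
      by rewrite ltr_pdivrMr ?ltr0n // mul1r (lt_le_trans e_lt1) ?ler1n.
    by move: c_ge; move: (e / _) => x; lra.
  have c0 : 0 <= d.+1%:R * c / (1 - c) by rewrite divr_ge0 ?mulr_ge0 // ltW.
  exists (Num.Def.archi_bound (d.+1%:R * c / (1 - c))).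
  move: (archi_boundP c0); set i := Num.Def.archi_bound _ => ci.
  rewrite ltr_pdivlMr ?ltr0n ?addn_gt0 // natrD.
  by move: ci; rewrite ltr_pdivrMr //; lra.
pose P j := (t `^ c / root_scale (d.+1 + j) t) @[t --> +oo] --> 0.
have [j [NPj Pj1]] : exists j, ~ P j /\ P j.+1.
  apply: (exists_switch (n := i)); last exact: powR_div_root_scale_cvg0.
  by apply: powR_div_root_scale_not_cvg0; rewrite ?addn0.
have dk : (d < d.+1 + j)%N by rewrite ltnS leq_addr.
exists (d.+1 + j)%N; split; first exact: derive1n_cvg0.
split; first exact: hardy_powR.
split; last by rewrite -addnS.
apply: (hardy_le_growth hH _ NPj).
apply: (hardy_div hH (hardy_powR hH hLE c) (hardy_root_scale dk)).
by apply: filterS (root_scale_gt0 dk) => t /lt0r_neq0.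
Qed.

Lemma S_class_not_all_powR k : F k t @[t --> +oo] --> 0 ->
  ~ exists2 c0, c0 < 1 &
      forall c, c0 < c -> c < 1 -> S_class H f k (fun t => t `^ c).
Proof.
move=> Fk_cvg0 [c0 c01 all_c].
have dk : (d < k)%N.
  rewrite ltnNge; apply/negP => kd; apply: (derive1n_unbounded (B := 1) kd).
  by move/cvgr0Pnorm_le : Fk_cvg0; apply.
set m := Num.max c0 (1 - e / k.+1%:R).
have m_ge1 : c0 <= m by rewrite le_max lexx.
have m_ge2 : 1 - e / k.+1%:R <= m by rewrite le_max lexx orbT.
have m_lt1 : m < 1 by rewrite gt_max c01 gtrBl divr_gt0 ?ltr0n.
have c0_lt : c0 < (m + 1) / 2 by lra.
have lt_1 : (m + 1) / 2 < 1 by lra.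
have [_ [_ c_lt]] := all_c _ c0_lt lt_1.
apply: (powR_div_root_scale_not_cvg0 (leqW dk) _ c_lt).
by apply: le_trans m_ge2 _; lra.
Qed.

End StronglyNonPolynomial.

Unset Implicit Arguments.

Theorem lemmaA3 (R : realType) (H : set (R -> R)) (f : R -> R)
  (hH : hardy_field H) (hLE : contains_LE H)
  (hcomp : hardy_closed_comp H) (hinv : hardy_closed_inv H)
  (hf : H f) (hsnp : strongly_nonpoly f)
  (hdelta : exists2 delta : R, 0 < delta & dominates f (fun t => t `^ delta)) :
  (* (i) *)
  (exists K : nat, forall k : nat, (K <= k)%N -> exists g, S_class H f k g)
  /\
  (* (ii) *)
  (exists2 c1 : R, c1 < 1 & forall c : R, c1 < c -> c < 1 -> 0 < c ->
      exists k0 : nat, derive1n k0 f x @[x --> +oo] --> 0 /\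
        S_class H f k0 (fun t => t `^ c))
  /\
  (* (iii) *)
  (forall k : nat, derive1n k f x @[x --> +oo] --> 0 ->
     ~ (exists2 c0 : R, c0 < 1 &
          forall c : R, c0 < c -> c < 1 -> S_class H f k (fun t => t `^ c))).
Proof.
have [d [f_gt_pow f_lt_pow]] := hsnp.
have [delta delta0 f_dom] := hdelta.
(* Any 0 < e < 1 with e <= delta will do. *)
pose e := Num.min delta 1 / 2.
have min0 : 0 < Num.min delta 1 by rewrite lt_min delta0 ltr01.
have e0 : 0 < e by rewrite divr_gt0.
have min1 : Num.min delta 1 <= 1 by rewrite ge_min lexx orbT.
have min_delta : Num.min delta 1 <= delta by rewrite ge_min lexx.
have e_lt1 : e < 1 by rewrite /e; lra.
have e_delta : e <= delta by rewrite /e; lra.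
have f_not_o := dominates_powR_not_o_powR e0 e_delta f_dom.
split; [|split].
- exists d.+1 => k dk; exists (root_scale f k).
  exact: root_scale_in_S_class hH hLE hf f_gt_pow f_lt_pow e0 e_lt1 f_not_o hcomp
    _ dk.
- exists (1 - e / d.+1%:R) => [|c c_gt c_lt1 _]; first by rewrite gtrBl divr_gt0.
  exact: powR_in_S_class hH hLE hf f_gt_pow f_lt_pow e0 e_lt1 f_not_o hcomp _
    (ltW c_gt) c_lt1.
- exact: S_class_not_all_powR hH hLE hf f_gt_pow f_lt_pow e0 e_lt1 f_not_o.
Qed.
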